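(* Let $P$ be an optimal planning problem whose optimal cost $C^*$ is attained by a feasible solution, let $\epsilon>0$, and let $A$ be a complete planner for feasible kinodynamic planning problems. Consider the procedure Bounded-Suboptimal$(P,\epsilon,A)$: run $A$ on $P_\infty$ to obtain a path $y_0$ and set $c_0=C(y_0)$; then for $i=1,2,\dots$, run $A$ on $P_{c_{i-1}-\epsilon}$; if it reports that no solution exists, stop; otherwise let $y_i$ be the returned solution and $c_i=C(y_i)$. Then this procedure terminates in finite time, and the last path $y_i$ it found has cost $C(y_i)\le C^*+\epsilon$.
   Context: A feasible kinodynamic planning problem asks for $S\ge0$, a trajectory $y:[0,S]\to X$ and control $u:[0,S]\to U$ with $y(0)=x_I$, $y(S)\in G$, $y(s)\in F$, $u(s)\in B(y(s))$, $y'(s)=D(y(s),u(s))$ for all $s$. An optimal planning problem $P$ additionally specifies an incremental cost $L$ and terminal cost $\Phi$ and minimizes $C(y)=\int_0^S L(y(s),u(s))ds+\Phi(y(S))$ over feasible solutions; $C^*$ is the minimum. For $\bar c\in\mathbb{R}\cup\{\infty\}$, $P_{\bar c}$ denotes the feasible kinodynamic problem (in the state-cost space $X\times\mathbb{R}$, with augmented state $(x,c)$, start $(x_I,0)$, dynamics $x'=D(x,u)$, $c'=L(x,u)$, and goal $\{(x,c): x\in G,\ c+\Phi(x)\le\bar c\}$) whose solutions are exactly the feasible trajectories of $P$ with cost $C(y)\le\bar c$; $P_\infty$ has goal $G$ with no cost bound. A planner $A$ is complete if on every feasible planning problem it terminates in finite time, returning a solution if one exists and reporting failure otherwise. *)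

From HB Require Import structures.
From mathcomp Require Import all_boot all_order all_algebra.
From mathcomp Require Import all_classical all_reals all_analysis.
Set Implicit Arguments. Unset Strict Implicit. Unset Printing Implicit Defensive.
Import Order.TTheory GRing.Theory Num.Theory.
Import numFieldNormedType.Exports.
Local Open Scope classical_set_scope.
Local Open Scope ring_scope.

Section Planning.
Variables (R : realType) (X : normedModType R) (U : Type).

Record opt_problem := OptProblem {
  x_I : X;
  goalG : set X;
  freeF : set X;
  admB : X -> set U;
  dynD : X -> U -> X;
  costL : X -> U -> R;
  termPhi : X -> R
}.

Record traj := Traj { dur : R; path : R -> X; ctl : R -> U }.

Definition integrand (P : opt_problem) (t : traj) : R -> R :=
  fun s => costL P (path t s) (ctl t s).

(* Feasible kinodynamic solution of P (cost functional well defined, i.e.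
   the integrand is Lebesgue integrable on [0,S]). *)
Definition feasible (P : opt_problem) (t : traj) : Prop :=
  [/\ 0 <= dur t,
      path t 0 = x_I P,
      goalG P (path t (dur t)),
      (forall s, 0 <= s <= dur t ->
         [/\ freeF P (path t s),
             admB P (path t s) (ctl t s) &
             is_derive s (1 : R) (path t) (dynD P (path t s) (ctl t s))]) &
      (@lebesgue_measure R).-integrable `[0, dur t]
        (fun s => (integrand P t s)%:E)].

Definition cost (P : opt_problem) (t : traj) : R :=
  Rintegral (@lebesgue_measure R) `[0, dur t] (integrand P t)
  + termPhi P (path t (dur t)).

(* Solutions of P_cbar (cbar : option R, None standing for +oo):
   exactly the feasible trajectories of P with cost <= cbar. *)
Definition solves_bounded (P : opt_problem) (cbar : option R) (t : traj) : Prop :=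
  feasible P t /\ (if cbar is Some c then cost P t <= c else True).

(* A planner, as used on the problems P_cbar: it always terminates (is a
   total function) and returns a solution or reports failure (None). *)
Definition planner := option R -> option traj.

Definition complete_planner (P : opt_problem) (A : planner) : Prop :=
  forall cbar, match A cbar with
               | Some t => solves_bounded P cbar t
               | None => ~ exists t, solves_bounded P cbar t
               end.

(* Bounded-Suboptimal(P, eps, A): run i is the result of the i-th call to A
   (call 0 on P_oo, call i+1 on P_{c_i - eps}); the procedure stops at the
   first call returning None. *)
Fixpoint bs_run (P : opt_problem) (eps : R) (A : planner) (i : nat) : option traj :=
  match i with
  | O => A None
  | S k => match bs_run P eps A k with
           | Some y => A (Some (cost P y - eps))
           | None => None
           end
  end.

End Planning.

From HB Require Import structures.
From mathcomp Require Import all_boot all_order all_algebra.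
From mathcomp Require Import all_classical all_reals all_analysis.
From mathcomp Require Import lra.
Set Implicit Arguments. Unset Strict Implicit. Unset Printing Implicit Defensive.
Import Order.TTheory GRing.Theory Num.Theory.
Import numFieldNormedType.Exports.
Local Open Scope classical_set_scope.
Local Open Scope ring_scope.

(* Every call after the first asks for a path at least [eps] cheaper than the
   previous one, so the n-th path found costs at most [c_0 - n eps]; as costs of
   feasible paths are bounded below by [C*], some call must fail.  When the call
   on [P_{c_n - eps}] fails, completeness says no feasible path costs at most
   [c_n - eps], in particular not the optimal one, whence [c_n < C* + eps]. *)

Lemma last_Some_before_None (T : Type) (f : nat -> option T) (m : nat) :
  f 0 <> None -> f m = None -> exists n y, f n = Some y /\ f n.+1 = None.
Proof.
move=> f0 fm; elim: m fm => [|m IHm] fm; first by [].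
case fm_eq: (f m) => [y|]; last exact: IHm.
by exists m, y.
Qed.

Section BoundedSuboptimal.
Variables (R : realType) (X : normedModType R) (U : Type).
Variables (P : opt_problem X U) (eps : R) (A : planner X U).
Hypothesis A_complete : complete_planner P A.

Lemma planner_sound (cbar : option R) (y : traj X U) :
  A cbar = Some y -> solves_bounded P cbar y.
Proof. by move=> Ay; have := A_complete cbar; rewrite Ay. Qed.

Lemma bs_run_succ (n : nat) (y : traj X U) :
  bs_run P eps A n = Some y -> bs_run P eps A n.+1 = A (Some (cost P y - eps)).
Proof. by move=> /= ->. Qed.

Lemma bs_run_feasible (n : nat) (y : traj X U) :
  bs_run P eps A n = Some y -> feasible P y.
Proof.
case: n => [|n] /=; first by move=> /planner_sound [].
by case: (bs_run P eps A n) => // z /planner_sound [].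
Qed.

Lemma bs_run_cost_le (y0 : traj X U) (n : nat) (y : traj X U) :
  bs_run P eps A 0 = Some y0 -> bs_run P eps A n = Some y ->
  cost P y <= cost P y0 - n%:R * eps.
Proof.
move=> run0; elim: n y => [|n IHn] y; first by rewrite run0 => -[->]; lra.
rewrite /=; case runn: (bs_run P eps A n) => [z|] // /planner_sound [_ cost_y].
have := IHn z runn; rewrite -natr1 mulrDl mul1r; lra.
Qed.

Lemma bs_run_stop_cost (n : nat) (y y' : traj X U) :
  bs_run P eps A n = Some y -> bs_run P eps A n.+1 = None ->
  feasible P y' -> cost P y <= cost P y' + eps.
Proof.
move=> runn; rewrite (bs_run_succ runn) => A_fails feas_y'.
have := A_complete (Some (cost P y - eps)); rewrite A_fails => no_sol.
case: (lerP (cost P y) (cost P y' + eps)) => // cost_gt.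
by exfalso; apply: no_sol; exists y'; split => //; lra.
Qed.

Lemma bs_run_terminates (lb : R) :
  0 < eps -> (forall y, feasible P y -> lb <= cost P y) ->
  exists m, bs_run P eps A m = None.
Proof.
move=> eps_gt0 lb_le; case run0: (bs_run P eps A 0) => [y0|]; last by exists 0%N.
pose m := Num.Def.archi_bound ((cost P y0 - lb) / eps).
exists m; case runm: (bs_run P eps A m) => [y|] //; exfalso.
have lb_y := lb_le y (bs_run_feasible runm).
have cost_y := bs_run_cost_le run0 runm.
have : (cost P y0 - lb) / eps < m%:R by apply: unstable.ltr_bound.
rewrite ltr_pdivrMr //; lra.
Qed.

End BoundedSuboptimal.

Theorem theorem2 (R : realType) (X : normedModType R) (U : Type)
  (P : opt_problem X U) (eps : R) (A : planner X U) :
  (exists ystar, feasible P ystar /\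
     forall y, feasible P y -> cost P ystar <= cost P y) ->
  0 < eps ->
  complete_planner P A ->
  exists (n : nat) (y : traj X U),
    [/\ bs_run P eps A n = Some y,
        bs_run P eps A n.+1 = None &
        forall ystar, feasible P ystar ->
          (forall y', feasible P y' -> cost P ystar <= cost P y') ->
          cost P y <= cost P ystar + eps].
Proof.
move=> [ys [feas_ys ys_opt]] eps_gt0 A_complete.
have [m runm] := bs_run_terminates A_complete eps_gt0 ys_opt.
have run0 : bs_run P eps A 0 <> None.
  rewrite /=; have := A_complete None; case: (A None) => // no_sol _.
  by apply: no_sol; exists ys.
have [n [y [runn stop]]] := last_Some_before_None run0 runm.
exists n, y; split=> // ystar feas_ystar _.
exact: bs_run_stop_cost runn stop feas_ystar.
Qed.
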